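(* Let $(\Lambda,\Pi,\perp,\mathrm{push})$ be a realizability lattice. For all $P,R\in\mathcal P_\bullet(\Pi)$ and $L\subseteq\Lambda$: $L\leadsto_\bullet R\subseteq P$ if and only if $R\subseteq P\ast_\bullet L$.
   Context: A realizability lattice consists of sets $\Lambda$ (terms), $\Pi$ (stacks), a relation $\perp\subseteq\Lambda\times\Pi$ (write $t\perp\pi$) and a map $\mathrm{push}:\Lambda\times\Pi\to\Pi$, written $t\cdot\pi$. For $L\subseteq\Lambda$, $L^\perp=\{\pi:\forall t\in L,\ t\perp\pi\}$; for $P\subseteq\Pi$, ${}^\perp P=\{t:\forall \pi\in P,\ t\perp\pi\}$; $\overline P=({}^\perp P)^\perp$; $\widehat P=\bigcup_{\pi\in P}\overline{\{\pi\}}$; $\mathcal P_\bullet(\Pi)=\{P\subseteq\Pi:\widehat P=P\}$. For $L\subseteq\Lambda$, $P\subseteq\Pi$: $L\leadsto P=\{t\cdot\pi:t\in L,\pi\in P\}$, $L\leadsto_\bullet P=\widehat{L\leadsto P}$, and $P\ast_\bullet L=\{\pi\in\Pi: t\cdot\pi'\in P\text{ for all }t\in L,\ \pi'\in\overline{\{\pi\}}\}$. *)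

Record RealizabilityLattice := {
  Lam : Type;
  Pi : Type;
  perp : Lam -> Pi -> Prop;
  push : Lam -> Pi -> Pi
}.

Section Defs.
Variable A : RealizabilityLattice.
Local Notation Λ := (Lam A).
Local Notation Π := (Pi A).
Local Notation "t ⊥ π" := (perp A t π) (at level 70).
Local Notation "t · π" := (push A t π) (at level 40).

Definition subset {T : Type} (X Y : T -> Prop) : Prop := forall x, X x -> Y x.

Definition orthL (L : Λ -> Prop) : Π -> Prop := fun π => forall t, L t -> t ⊥ π.
Definition orthP (P : Π -> Prop) : Λ -> Prop := fun t => forall π, P π -> t ⊥ π.
Definition closure (P : Π -> Prop) : Π -> Prop := orthL (orthP P).
Definition single (π : Π) : Π -> Prop := fun π' => π' = π.
Definition hat (P : Π -> Prop) : Π -> Prop :=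
  fun ρ => exists π, P π /\ closure (single π) ρ.
Definition bullet_closed (P : Π -> Prop) : Prop := forall ρ, hat P ρ <-> P ρ.
Definition arrow (L : Λ -> Prop) (P : Π -> Prop) : Π -> Prop :=
  fun ρ => exists t π, L t /\ P π /\ ρ = t · π.
Definition arrow_b (L : Λ -> Prop) (P : Π -> Prop) : Π -> Prop := hat (arrow L P).
Definition star_b (P : Π -> Prop) (L : Λ -> Prop) : Π -> Prop :=
  fun π => forall t π', L t -> closure (single π) π' -> P (t · π').
End Defs.


(* Both directions reduce to two facts: every stack lies in the closure of its own singleton, and a set in
   P_•(Π) contains the closure of each of its singletons. Hence P ⊇ L ~>_• R amounts to P containing t · π'
   for t ∈ L and π' in the closure of some π ∈ R, which is exactly R ⊆ P *_• L. *)

Section BulletClosed.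
Variable A : RealizabilityLattice.

Lemma closure_single_refl (π : Pi A) : closure A (single A π) π.
Proof. intros t Ht; apply Ht; reflexivity. Qed.

Lemma subset_hat (P : Pi A -> Prop) : subset P (hat A P).
Proof. intros π Pπ; exists π; split; [exact Pπ | apply closure_single_refl]. Qed.

Lemma bullet_closed_closure (P : Pi A -> Prop) (π ρ : Pi A) :
  bullet_closed A P -> P π -> closure A (single A π) ρ -> P ρ.
Proof. intros HP Pπ Hρ; apply HP; exists π; split; assumption. Qed.

Lemma push_in_arrow_b (L : Lam A -> Prop) (R : Pi A -> Prop) t π :
  L t -> R π -> arrow_b A L R (push A t π).
Proof. intros Lt Rπ; apply subset_hat; exists t, π; repeat split; assumption. Qed.

End BulletClosed.

Theorem mainTheorem3 (A : RealizabilityLattice) (P R : Pi A -> Prop)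
  (L : Lam A -> Prop) :
  bullet_closed A P -> bullet_closed A R ->
  (subset (arrow_b A L R) P <-> subset R (star_b A P L)).
Proof.
  intros HP HR; split.
  - intros HLR π Rπ t π' Lt Hπ'.
    apply HLR, push_in_arrow_b; [exact Lt |].
    exact (bullet_closed_closure A R π π' HR Rπ Hπ').
  - intros HRP ρ [σ [[t [π [Lt [Rπ ->]]]] Hρ]].
    apply (bullet_closed_closure A P (push A t π) ρ HP); [| exact Hρ].
    exact (HRP π Rπ t π Lt (closure_single_refl A π)).
Qed.
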